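(* If $a_1,a_2,a_3,a_4\ge2$ and $D=a_1+a_2+a_3+a_4$, then the leading term of $V_3(x_1^{a_1}x_2^{a_2}x_1^{a_3}x_2^{a_4})$ is $+s^{3D-4}$.
   Context: $\mathcal{B}_3$ is the 3-strand braid group with Artin generators $x_1,x_2$; $V_3(\beta)$ is the Jones polynomial of the closure of $\beta$, normalized by $V(\text{unknot})=1$ and $q^{-1}V_{L_+}-qV_{L_-}=(q^{1/2}-q^{-1/2})V_{L_0}$, written as a Laurent polynomial in $s=q^{-1/2}$. Conventions: closures of $\alpha x_i^{e+2}\gamma$, $\alpha x_i^{e+1}\gamma$, $\alpha x_i^{e}\gamma$ play the roles of $L_-,L_0,L_+$ (e.g. the closure of $x_1^2\in\mathcal B_2$ has Jones polynomial $-s-s^5$). The leading term is the term of highest degree in $s$. *)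

(* Jones polynomial of closures of 3-braids, via the
   Kauffman bracket computed in the Temperley--Lieb algebra TL_3. *)
From mathcomp Require Import all_boot all_order all_algebra.
Set Implicit Arguments. Unset Strict Implicit. Unset Printing Implicit Defensive.
Import Order.TTheory GRing.Theory Num.Theory.
Local Open Scope ring_scope.

(* Laur k p represents A^k * p(A). *)
Record laurent := Laur { lsh : int; lp : {poly int} }.

Definition lcoef (f : laurent) (k : int) : int :=
  if lsh f <= k then (lp f)`_(absz (k - lsh f)) else 0.

Definition ladd (f g : laurent) : laurent :=
  let m := Order.min (lsh f) (lsh g) in
  Laur m (lp f * 'X^(absz (lsh f - m)) + lp g * 'X^(absz (lsh g - m))).

Definition lmul (f g : laurent) : laurent := Laur (lsh f + lsh g) (lp f * lp g).

Definition lmono (k : int) (c : int) : laurent := Laur k c%:P.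

Definition lzero : laurent := lmono 0 0.

Definition loopd : laurent := ladd (lmono 2 (-1)) (lmono (-2) (-1)).

(* ---------- TL_3 with basis 1, e1, e2, e1e2, e2e1 ---------- *)
Record tl3 := TL3 { t0 : laurent; t1 : laurent; t2 : laurent; t12 : laurent; t21 : laurent }.

Definition tl_one : tl3 := TL3 (lmono 0 1) lzero lzero lzero lzero.

(* right multiplication by e1 and by e2, using e_i^2 = d e_i, e_i e_j e_i = e_i *)
Definition tl_re1 (v : tl3) : tl3 :=
  TL3 lzero (ladd (ladd (t0 v) (lmul loopd (t1 v))) (t12 v)) lzero lzero
      (ladd (t2 v) (lmul loopd (t21 v))).
Definition tl_re2 (v : tl3) : tl3 :=
  TL3 lzero lzero (ladd (ladd (t0 v) (lmul loopd (t2 v))) (t21 v))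
      (ladd (t1 v) (lmul loopd (t12 v))) lzero.

Definition tl_add (v w : tl3) : tl3 :=
  TL3 (ladd (t0 v) (t0 w)) (ladd (t1 v) (t1 w)) (ladd (t2 v) (t2 w))
      (ladd (t12 v) (t12 w)) (ladd (t21 v) (t21 w)).
Definition tl_scale (c : laurent) (v : tl3) : tl3 :=
  TL3 (lmul c (t0 v)) (lmul c (t1 v)) (lmul c (t2 v)) (lmul c (t12 v)) (lmul c (t21 v)).

(* Markov trace = Kauffman bracket of the closure (d^(#loops - 1)):
   tr 1 = d^2, tr e1 = tr e2 = d, tr e1e2 = tr e2e1 = 1 *)
Definition tl_tr (v : tl3) : laurent :=
  ladd (ladd (lmul (lmul loopd loopd) (t0 v)) (lmul loopd (ladd (t1 v) (t2 v))))
       (ladd (t12 v) (t21 v)).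

(* a letter (g, pos): g = false is x_1, g = true is x_2; pos = false means inverse *)
Definition letter := (bool * bool)%type.
Definition x1 : letter := (false, true).
Definition x2 : letter := (true, true).

(* Kauffman bracket images: x_i |-> A + A^-1 e_i, x_i^-1 |-> A^-1 + A e_i *)
Definition tl_step (v : tl3) (l : letter) : tl3 :=
  let e := if l.1 then tl_re2 v else tl_re1 v in
  if l.2 then tl_add (tl_scale (lmono 1 1) v) (tl_scale (lmono (-1) 1) e)
  else tl_add (tl_scale (lmono (-1) 1) v) (tl_scale (lmono 1 1) e).

Definition writhe (w : seq letter) : int :=
  (count (fun l : letter => l.2) w)%:Z - (count (fun l : letter => ~~ l.2) w)%:Z.

(* normalized bracket (-A^3)^(-writhe) <closure>, a Laurent polynomial in A *)
Definition jones_A (w : seq letter) : laurent :=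
  lmul (lmono (- (3%:Z * writhe w)) ((-1) ^+ absz (writhe w)))
       (tl_tr (foldl tl_step tl_one w)).

(* V_3(w), as the coefficient function k |-> [s^k] V_3(w), where s = A^-2
   (so s = t^(1/2) for the standard Jones variable t when x_i is read as a
   positive crossing; this matches the paper's convention, in which x_i plays
   the role of a negative crossing and s = q^(-1/2)). *)
Definition V3coef (w : seq letter) (k : int) : int := lcoef (jones_A w) (- (2%:Z * k)).

Definition leading_term (w : seq letter) (c : int) (n : int) : Prop :=
  V3coef w n = c /\ forall k : int, n < k -> V3coef w k = 0.

From mathcomp Require Import all_boot all_order all_algebra.
From mathcomp Require Import zify ring.
Set Implicit Arguments. Unset Strict Implicit. Unset Printing Implicit Defensive.
Import Order.TTheory GRing.Theory Num.Theory.
Local Open Scope ring_scope.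

(* The bracket of the closure is the Markov trace of the product of the images [A + A^-1 e_i] of the letters
   in TL_3, and the leading term in [s = A^-2] is the lowest term in [A].  We follow the lowest term of each
   of the five coordinates of the TL_3 element along the word.  Under a block [x_i^(b+1)] the coordinates on
   basis words not ending in [e_i] are just multiplied by [A^(b+1)], while the other two are fed at every
   letter and their lowest terms lose [A^3] and change sign per letter; since every block has length at least
   2, at each stage a single term dominates.  At the end the coordinate on [e_1 e_2] dominates the trace,
   giving [(-1)^B A^(-3B-4)] with [B = D - 4], and the writhe normalisation [(-A^3)^(-D)] turns it into
   [A^(8-6D) = s^(3D-4)] with coefficient [1]. *)

Lemma coef_mulXn_shift (p : {poly int}) (s m k : int) : m <= s -> m <= k ->
  (p * 'X^(absz (s - m)))`_(absz (k - m)) = if s <= k then p`_(absz (k - s)) else 0.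
Proof.
move=> ms mk; rewrite coefMXn.
have -> : (absz (k - m) < absz (s - m))%N = ~~ (s <= k) by lia.
case: (boolP (s <= k)) => //= sk.
by have -> : (absz (k - m) - absz (s - m))%N = absz (k - s) by lia.
Qed.

Lemma lcoef_ladd (f g : laurent) (k : int) : lcoef (ladd f g) k = lcoef f k + lcoef g k.
Proof.
rewrite /lcoef /ladd /=; set m := Order.min (lsh f) (lsh g).
have mf : m <= lsh f by rewrite ge_min lexx.
have mg : m <= lsh g by rewrite ge_min lexx orbT.
case: ifP => mk; first by rewrite coefD !coef_mulXn_shift.
have /negbTE -> : ~~ (lsh f <= k) by rewrite -ltNge; apply: lt_le_trans mf; rewrite ltNge mk.
have /negbTE -> : ~~ (lsh g <= k) by rewrite -ltNge; apply: lt_le_trans mg; rewrite ltNge mk.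
by rewrite addr0.
Qed.

(* [f = c A^n + higher powers of A]; with [c = 0] this only bounds the order of [f] from below. *)
Definition low_term (f : laurent) (n c : int) : Prop :=
  (forall k, k < n -> lcoef f k = 0) /\ lcoef f n = c.

Lemma low_term_congr f n c n' c' : low_term f n c -> n = n' -> c = c' -> low_term f n' c'.
Proof. by move=> h <- <-. Qed.

Lemma low_term_lt0 f n c m : low_term f n c -> m < n -> low_term f m 0.
Proof. by move=> [vf _] mn; split=> [k km|]; apply: vf => //; apply: lt_trans mn. Qed.

Lemma low_term_le0 f n m : low_term f n 0 -> m <= n -> low_term f m 0.
Proof. by move=> h; rewrite le_eqVlt => /predU1P [-> | /(low_term_lt0 h)]. Qed.

Lemma low_term_lsh f : low_term f (lsh f) (lcoef f (lsh f)).
Proof. by split => // k hk; rewrite /lcoef lt_geF. Qed.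

Lemma low_term_below_lsh f n c : n < lsh f -> low_term f n c -> c = 0.
Proof. by move=> nf [_ <-]; rewrite /lcoef lt_geF. Qed.

Lemma low_term_mono k c : low_term (lmono k c) k c.
Proof.
rewrite /low_term /lcoef /=; split=> [j jk|]; first by rewrite lt_geF.
by rewrite lexx subrr coefC.
Qed.

Lemma low_term0 n : low_term lzero n 0.
Proof. by split=> [k _|]; rewrite /lcoef coefC; case: ifP => //; case: eqP. Qed.

Lemma low_termD f g n c c' : low_term f n c -> low_term g n c' -> low_term (ladd f g) n (c + c').
Proof.
move=> [vf cf] [vg cg]; split; last by rewrite lcoef_ladd cf cg.
by move=> k kn; rewrite lcoef_ladd vf // vg // addr0.
Qed.

Lemma low_term_divXn f n c : lsh f <= n -> low_term f n c ->
  exists q, lp f = q * 'X^(absz (n - lsh f)) /\ q`_0 = c.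
Proof.
move=> fn [vf cf]; set t := absz (n - lsh f).
exists (drop_poly t (lp f)); split; last by rewrite coef_drop_poly add0n -cf /lcoef fn.
suff lowf0 : take_poly t (lp f) = 0.
  by rewrite -{1}(poly_take_drop t (lp f)) lowf0 add0r.
apply/polyP => i; rewrite coef_take_poly coef0; case: ifP => // it.
have := vf (lsh f + Posz i); rewrite /lcoef.
have -> : lsh f <= lsh f + Posz i by lia.
have -> : absz (lsh f + Posz i - lsh f)%R = i by lia.
by apply; lia.
Qed.

Lemma low_termM_lsh f g n m c c' : lsh f <= n -> lsh g <= m ->
  low_term f n c -> low_term g m c' -> low_term (lmul f g) (n + m) (c * c').
Proof.
move=> fn gm /(low_term_divXn fn) [qf [ef cf]] /(low_term_divXn gm) [qg [eg cg]].
have efg : lp (lmul f g) = (qf * qg) * 'X^(absz (n - lsh f) + absz (m - lsh g)).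
  by rewrite /= ef eg exprD mulrACA.
split=> [k kn|]; rewrite /lcoef efg /= coefMXn.
  by case: ifP => // fgk; case: ifP => // /negbT; lia.
have -> : lsh f + lsh g <= n + m by lia.
set e := absz (n + m - (lsh f + lsh g))%R.
have -> : (e < absz (n - lsh f)%R + absz (m - lsh g)%R)%N = false by rewrite /e; lia.
have -> : (e - (absz (n - lsh f)%R + absz (m - lsh g)%R))%N = 0%N by rewrite /e; lia.
by rewrite coef0M cf cg.
Qed.

Lemma low_termM f g n m c c' :
  low_term f n c -> low_term g m c' -> low_term (lmul f g) (n + m) (c * c').
Proof.
move=> lf lg; case: (leP (lsh f) n) => fn; case: (leP (lsh g) m) => gm.
- exact: low_termM_lsh.
- rewrite (low_term_below_lsh gm lg) mulr0.
  by apply: low_term_lt0 (low_termM_lsh fn (lexx _) lf (low_term_lsh g)) _; lia.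
- rewrite (low_term_below_lsh fn lf) mul0r.
  by apply: low_term_lt0 (low_termM_lsh (lexx _) gm (low_term_lsh f) lg) _; lia.
- rewrite (low_term_below_lsh fn lf) mul0r.
  have := low_termM_lsh (lexx _) (lexx _) (low_term_lsh f) (low_term_lsh g).
  by move/low_term_lt0; apply; lia.
Qed.

Lemma low_term_loopd : low_term loopd (-2) (-1).
Proof.
have d2 := low_term_lt0 (low_term_mono 2 (-1)) (_ : -2 < 2).
by apply: low_term_congr (low_termD (d2 _) (low_term_mono (-2) (-1))) _ _.
Qed.

Lemma low_term_loopdM x n c : low_term x n c -> low_term (lmul loopd x) (n - 2) (- c).
Proof. by move=> h; apply: low_term_congr (low_termM low_term_loopd h) _ _; ring. Qed.

Lemma low_term_step_unfed x n c :
  low_term x n c -> low_term (ladd (lmul (lmono 1 1) x) (lmul (lmono (-1) 1) lzero)) (n + 1) c.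
Proof.
move=> lx; have lz : low_term (lmul (lmono (-1) 1) lzero) (1 + n) 0.
  by apply: low_term_congr (low_termM (low_term_mono (-1) 1) (low_term0 (n + 2))) _ _; ring.
by apply: low_term_congr (low_termD (low_termM (low_term_mono 1 1) lx) lz) _ _; ring.
Qed.

Lemma low_term_step_fed x n c y m e : low_term x n c -> low_term y m e -> m < n + 2 ->
  low_term (ladd (lmul (lmono 1 1) x) (lmul (lmono (-1) 1) y)) (m - 1) e.
Proof.
move=> lx ly mn; have lAx := low_term_lt0 (low_termM (low_term_mono 1 1) lx) (_ : -1 + m < 1 + n).
by apply: low_term_congr (low_termD (lAx _) (low_termM (low_term_mono (-1) 1) ly)) _ _;
  [lia | ring | ring].
Qed.

Definition tl_low_terms (v : tl3) (n0 c0 n1 c1 n2 c2 n12 c12 n21 c21 : int) : Prop :=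
  [/\ low_term (t0 v) n0 c0, low_term (t1 v) n1 c1, low_term (t2 v) n2 c2,
      low_term (t12 v) n12 c12 & low_term (t21 v) n21 c21].

(* Under [x_1 = A + A^-1 e_1] the coordinates on [1], [e_2], [e_1 e_2] are only multiplied by [A]; those on
   [e_1] and [e_2 e_1] are fed the coefficients of [v e_1], so their lowest terms lose [A^3] and change sign
   at each letter. *)
Lemma low_terms_x1_power v (b : nat) n0 c0 n1 c1 n2 c2 n12 c12 n21 c21 p c q c' :
  tl_low_terms v n0 c0 n1 c1 n2 c2 n12 c12 n21 c21 ->
  low_term (ladd (ladd (t0 v) (lmul loopd (t1 v))) (t12 v)) p c ->
  low_term (ladd (t2 v) (lmul loopd (t21 v))) q c' ->
  p <= n0 -> p <= n1 - 2 -> p <= n12 -> q <= n2 -> q <= n21 - 2 ->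
  tl_low_terms (foldl tl_step v (nseq b.+1 x1))
    (n0 + b%:Z + 1) c0 (p - 3 * b%:Z - 1) ((-1) ^+ b * c)
    (n2 + b%:Z + 1) c2 (n12 + b%:Z + 1) c12 (q - 3 * b%:Z - 1) ((-1) ^+ b * c').
Proof.
move=> [l0 l1 l2 l12 l21] lp lq pn0 pn1 pn12 qn2 qn21.
elim: b => [|b [w0 w1 w2 w12 w21]].
  split=> /=.
  - by apply: low_term_congr (low_term_step_unfed l0) _ _; rewrite ?addr0.
  - by apply: low_term_congr (low_term_step_fed l1 lp _) _ _; [lia | lia | ring].
  - by apply: low_term_congr (low_term_step_unfed l2) _ _; rewrite ?addr0.
  - by apply: low_term_congr (low_term_step_unfed l12) _ _; rewrite ?addr0.
  - by apply: low_term_congr (low_term_step_fed l21 lq _) _ _; [lia | lia | ring].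
rewrite -addn1 nseqD foldl_cat; set w := foldl _ _ _ in w0 w1 w2 w12 w21 *.
split=> /=.
- by apply: low_term_congr (low_term_step_unfed w0) _ _; lia.
- have e0 := low_term_lt0 w0 (_ : p - 3 * b%:Z - 1 - 2 < n0 + b%:Z + 1).
  have e12 := low_term_lt0 w12 (_ : p - 3 * b%:Z - 1 - 2 < n12 + b%:Z + 1).
  have fed := low_termD (low_termD (e0 _) (low_term_loopdM w1)) (e12 _).
  by apply: low_term_congr (low_term_step_fed w1 (fed _ _) _) _ _; try lia; rewrite exprS; ring.
- by apply: low_term_congr (low_term_step_unfed w2) _ _; lia.
- by apply: low_term_congr (low_term_step_unfed w12) _ _; lia.
- have e2 := low_term_lt0 w2 (_ : q - 3 * b%:Z - 1 - 2 < n2 + b%:Z + 1).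
  have fed := low_termD (e2 _) (low_term_loopdM w21).
  by apply: low_term_congr (low_term_step_fed w21 (fed _) _) _ _; try lia; rewrite exprS; ring.
Qed.

Definition tl_swap (v : tl3) : tl3 := TL3 (t0 v) (t2 v) (t1 v) (t21 v) (t12 v).

Lemma tl_swapK : involutive tl_swap.
Proof. by case. Qed.

Lemma foldl_x2_swap v n :
  foldl tl_step (tl_swap v) (nseq n x2) = tl_swap (foldl tl_step v (nseq n x1)).
Proof. by elim: n v => //= n IH v; rewrite -IH. Qed.

Lemma tl_low_terms_swap v n0 c0 n1 c1 n2 c2 n12 c12 n21 c21 :
  tl_low_terms v n0 c0 n1 c1 n2 c2 n12 c12 n21 c21 ->
  tl_low_terms (tl_swap v) n0 c0 n2 c2 n1 c1 n21 c21 n12 c12.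
Proof. by case. Qed.

Lemma low_terms_x2_power v (b : nat) n0 c0 n1 c1 n2 c2 n12 c12 n21 c21 p c q c' :
  tl_low_terms v n0 c0 n1 c1 n2 c2 n12 c12 n21 c21 ->
  low_term (ladd (ladd (t0 v) (lmul loopd (t2 v))) (t21 v)) p c ->
  low_term (ladd (t1 v) (lmul loopd (t12 v))) q c' ->
  p <= n0 -> p <= n2 - 2 -> p <= n21 -> q <= n1 -> q <= n12 - 2 ->
  tl_low_terms (foldl tl_step v (nseq b.+1 x2))
    (n0 + b%:Z + 1) c0 (n1 + b%:Z + 1) c1 (p - 3 * b%:Z - 1) ((-1) ^+ b * c)
    (q - 3 * b%:Z - 1) ((-1) ^+ b * c') (n21 + b%:Z + 1) c21.
Proof.
move=> /tl_low_terms_swap lv lp lq pn0 pn2 pn21 qn1 qn12.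
rewrite -[v]tl_swapK foldl_x2_swap; apply: tl_low_terms_swap.
exact: low_terms_x1_power lv lp lq pn0 pn2 pn21 qn1 qn12.
Qed.

Lemma low_terms_x1x2 (b1 b2 : nat) :
  tl_low_terms (foldl tl_step tl_one (nseq b1.+1 x1 ++ nseq b2.+1 x2))
    (b1%:Z + b2%:Z + 2) 1 (b2%:Z - 3 * b1%:Z) ((-1) ^+ b1) (b1%:Z - 3 * b2%:Z) ((-1) ^+ b2)
    (- 3 * (b1 + b2)%:Z - 2) ((-1) ^+ (b1 + b2)) (b1%:Z + b2%:Z + 3) 0.
Proof.
rewrite foldl_cat.
(* any order of the zero coordinates of [1] large enough to stay dominated through both blocks *)
have [K K_def] : {K : int | K = 4 * b1%:Z + 3} by exists (4 * b1%:Z + 3).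
have one : tl_low_terms tl_one 0 1 K 0 K 0 K 0 (K + 2) 0.
  by split; [exact: low_term_mono | exact: low_term0 ..].
have S1 : low_term (ladd (ladd (t0 tl_one) (lmul loopd (t1 tl_one))) (t12 tl_one)) 0 1.
  have d0 := low_term_lt0 (low_term_loopdM (low_term0 3)) (_ : 0 < 3 - 2).
  by apply: low_term_congr (low_termD (low_termD (low_term_mono 0 1) (d0 _)) (low_term0 0)) _ _;
    by [lia | ring].
have Q1 : low_term (ladd (t2 tl_one) (lmul loopd (t21 tl_one))) K 0.
  have d0 := low_term_lt0 (low_term_loopdM (low_term0 (K + 3))) (_ : K < K + 3 - 2).
  by apply: low_term_congr (low_termD (low_term0 K) (d0 _)) _ _; by [lia | ring].
have [l0 l1 l2 l12 l21] := low_terms_x1_power b1 one S1 Q1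
  ltac:(lia) ltac:(lia) ltac:(lia) ltac:(lia) ltac:(lia).
set v := foldl _ _ (nseq _ _) in l0 l1 l2 l12 l21 *.
have S2 : low_term (ladd (ladd (t0 v) (lmul loopd (t2 v))) (t21 v)) (b1%:Z + 1) 1.
  have d2 := low_term_lt0 (low_term_loopdM l2) (_ : 0 + b1%:Z + 1 < K + b1%:Z + 1 - 2).
  have l21' := low_term_le0 (low_term_congr l21 (erefl _) (mulr0 _))
    (_ : 0 + b1%:Z + 1 <= K - 3 * b1%:Z - 1).
  by apply: low_term_congr (low_termD (low_termD l0 (d2 _)) (l21' _)) _ _; by [lia | ring].
have Q2 : low_term (ladd (t1 v) (lmul loopd (t12 v))) (- 3 * b1%:Z - 1) ((-1) ^+ b1).
  have d12 := low_term_lt0 (low_term_loopdM l12) (_ : 0 - 3 * b1%:Z - 1 < K + b1%:Z + 1 - 2).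
  by apply: low_term_congr (low_termD l1 (d12 _)) _ _; by [lia | ring].
have [w0 w1 w2 w12 w21] := low_terms_x2_power b2 (And5 l0 l1 l2 l12 l21) S2 Q2
  ltac:(lia) ltac:(lia) ltac:(lia) ltac:(lia) ltac:(lia).
by split; [apply: low_term_congr w0 _ _ | apply: low_term_congr w1 _ _ | apply: low_term_congr w2 _ _
  | apply: low_term_congr w12 _ _ | apply: low_term_congr w21 _ _]; by [rewrite ?exprD; ring | lia].
Qed.

Lemma low_term_tl_tr v n c :
  low_term (t0 v) (n + 4) 0 -> low_term (t1 v) (n + 2) 0 -> low_term (t2 v) (n + 2) 0 ->
  low_term (t12 v) n c -> low_term (t21 v) n 0 -> low_term (tl_tr v) n c.
Proof.
move=> l0 l1 l2 l12 l21.
have ddl0 : low_term (lmul (lmul loopd loopd) (t0 v)) n 0.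
  by apply: low_term_congr (low_termM (low_termM low_term_loopd low_term_loopd) l0) _ _; ring.
have dl12 : low_term (lmul loopd (ladd (t1 v) (t2 v))) n 0.
  by apply: low_term_congr (low_termM low_term_loopd (low_termD l1 l2)) _ _; ring.
by apply: low_term_congr (low_termD (low_termD ddl0 dl12) (low_termD l12 l21)) _ _; ring.
Qed.

Lemma low_term_bracket (b1 b2 b3 b4 : nat) :
  (0 < b1)%N -> (0 < b2)%N -> (0 < b3)%N -> (0 < b4)%N ->
  low_term (tl_tr (foldl tl_step tl_one
             (nseq b1.+1 x1 ++ nseq b2.+1 x2 ++ nseq b3.+1 x1 ++ nseq b4.+1 x2)))
    (- 3 * (b1 + b2 + b3 + b4)%:Z - 4) ((-1) ^+ (b1 + b2 + b3 + b4)).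
Proof.
move=> b1_gt0 b2_gt0 b3_gt0 b4_gt0; rewrite catA foldl_cat foldl_cat.
have [l0 l1 l2 l12 l21] := low_terms_x1x2 b1 b2.
set v := foldl tl_step tl_one _ in l0 l1 l2 l12 l21 *.
set p := - 3 * (b1 + b2)%:Z - 2.
have S3 : low_term (ladd (ladd (t0 v) (lmul loopd (t1 v))) (t12 v)) p ((-1) ^+ (b1 + b2)).
  have e0 := low_term_lt0 l0 (_ : p < b1%:Z + b2%:Z + 2).
  have e1 := low_term_lt0 (low_term_loopdM l1) (_ : p < b2%:Z - 3 * b1%:Z - 2).
  by apply: low_term_congr (low_termD (low_termD (e0 _) (e1 _)) l12) _ _; by [lia | ring].
have Q3 : low_term (ladd (t2 v) (lmul loopd (t21 v))) (b1%:Z - 3 * b2%:Z) ((-1) ^+ b2).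
  have e21 := low_term_lt0 (low_term_loopdM l21) (_ : b1%:Z - 3 * b2%:Z < b1%:Z + b2%:Z + 3 - 2).
  by apply: low_term_congr (low_termD l2 (e21 _)) _ _; by [lia | ring].
have [w0 w1 w2 w12 w21] := low_terms_x1_power b3 (And5 l0 l1 l2 l12 l21) S3 Q3
  ltac:(lia) ltac:(lia) ltac:(lia) ltac:(lia) ltac:(lia).
set w := foldl _ v _ in w0 w1 w2 w12 w21 *.
set p' := b1%:Z - 3 * b2%:Z - 3 * b3%:Z - 1.
have S4 : low_term (ladd (ladd (t0 w) (lmul loopd (t2 w))) (t21 w)) p' ((-1) ^+ (b2 + b3)).
  have e0 := low_term_lt0 w0 (_ : p' < b1%:Z + b2%:Z + 2 + b3%:Z + 1).
  have e2 := low_term_lt0 (low_term_loopdM w2) (_ : p' < b1%:Z - 3 * b2%:Z + b3%:Z + 1 - 2).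
  apply: low_term_congr (low_termD (low_termD (e0 _) (e2 _)) w21) _ _;
    by [lia | rewrite exprD; ring].
set q' := p - 3 * b3%:Z - 1.
have Q4 : low_term (ladd (t1 w) (lmul loopd (t12 w))) q' ((-1) ^+ (b1 + b2 + b3)).
  have e12 := low_term_lt0 (low_term_loopdM w12) (_ : q' < p + b3%:Z + 1 - 2).
  by apply: low_term_congr (low_termD w1 (e12 _)) _ _; by [lia | rewrite !exprD; ring].
have [u0 u1 u2 u12 u21] := low_terms_x2_power b4 (And5 w0 w1 w2 w12 w21) S4 Q4
  ltac:(lia) ltac:(lia) ltac:(lia) ltac:(lia) ltac:(lia).
apply: low_term_tl_tr.
- by apply: low_term_lt0 u0 _; lia.
- by apply: low_term_lt0 u1 _; lia.
- by apply: low_term_lt0 u2 _; lia.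
- by apply: low_term_congr u12 _ _; by [lia | rewrite !exprD; ring].
- by apply: low_term_lt0 u21 _; lia.
Qed.

Lemma leading_term_jones w k c : low_term (jones_A w) (- (2%:Z * k)) c -> leading_term w c k.
Proof. by move=> [vanish lowc]; split=> // j kj; apply: vanish; lia. Qed.

Theorem proposition4p4 (a1 a2 a3 a4 : nat) :
  (2 <= a1)%N -> (2 <= a2)%N -> (2 <= a3)%N -> (2 <= a4)%N ->
  let D : nat := (a1 + a2 + a3 + a4)%N in
  leading_term (nseq a1 x1 ++ nseq a2 x2 ++ nseq a3 x1 ++ nseq a4 x2)
               1 (3%:Z * D%:Z - 4%:Z).
Proof.
case: a1 => // b1 b1_gt0; case: a2 => // b2 b2_gt0.
case: a3 => // b3 b3_gt0; case: a4 => // b4 b4_gt0 D.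
set w := _ ++ _.
have writhe_w : writhe w = D%:Z by rewrite /writhe !count_cat !count_nseq /= /D; lia.
apply: leading_term_jones.
have bracket_w := low_term_bracket b1_gt0 b2_gt0 b3_gt0 b4_gt0.
apply: low_term_congr (low_termM (low_term_mono _ _) bracket_w) _ _; rewrite writhe_w /D; first lia.
rewrite (_ : absz _ = b1 + b2 + b3 + b4 + 4)%N; last by lia.
by rewrite exprD mulr1 -exprD addnn -mul2n exprM sqrrN !expr1n.
Qed.
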